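(* $\mathcal{M}_{3,3}=\overline{\operatorname{RBM}_{3,2}}$, where the bar denotes topological closure in $\Delta_7$. Moreover, $\mathcal{M}_{3,3}$ and $\operatorname{RBM}_{3,2}$ contain exactly the same strictly positive distributions.
   Context: A distribution of three binary random variables is a $2\times2\times2$ tensor $p=(p_{ijk})_{i,j,k\in\{0,1\}}$ with nonnegative entries summing to $1$; the set of these is the simplex $\Delta_7$. For $a,b,c\in\mathbb{R}^2_{\ge0}$, $a\otimes b\otimes c$ is the tensor with entries $a_ib_jc_k$. $\mathcal{M}_{3,3}$ is the set of $p\in\Delta_7$ that are a sum of three tensors of the form $a\otimes b\otimes c$ with $a,b,c\in\mathbb{R}^2_{\ge0}$ (nonnegative rank at most $3$). $\operatorname{RBM}_{3,2}$ is the set of $p\in\Delta_7$ of the form $p=(a_1\otimes b_1\otimes c_1+d_1\otimes e_1\otimes f_1)*(a_2\otimes b_2\otimes c_2+d_2\otimes e_2\otimes f_2)$ with all vectors in $\mathbb{R}^2_{\ge0}$, where $*$ is the entrywise (Hadamard) product. *)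

From Stdlib Require Import Reals.
Open Scope R_scope.

(* A 2x2x2 tensor, indexed by bool = {0,1}. *)
Definition tensor := bool -> bool -> bool -> R.

Definition nonneg2 (a : bool -> R) : Prop := forall i, 0 <= a i.

Definition outer3 (a b c : bool -> R) : tensor := fun i j k => a i * b j * c k.

Definition tsum (p : tensor) : R :=
  p false false false + p false false true + p false true false + p false true true +
  p true false false + p true false true + p true true false + p true true true.

Definition in_simplex (p : tensor) : Prop :=
  (forall i j k, 0 <= p i j k) /\ tsum p = 1.

Definition in_M33 (p : tensor) : Prop :=
  in_simplex p /\
  exists a1 b1 c1 a2 b2 c2 a3 b3 c3 : bool -> R,
    nonneg2 a1 /\ nonneg2 b1 /\ nonneg2 c1 /\
    nonneg2 a2 /\ nonneg2 b2 /\ nonneg2 c2 /\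
    nonneg2 a3 /\ nonneg2 b3 /\ nonneg2 c3 /\
    forall i j k, p i j k = outer3 a1 b1 c1 i j k + outer3 a2 b2 c2 i j k + outer3 a3 b3 c3 i j k.

Definition in_RBM32 (p : tensor) : Prop :=
  in_simplex p /\
  exists a1 b1 c1 d1 e1 f1 a2 b2 c2 d2 e2 f2 : bool -> R,
    nonneg2 a1 /\ nonneg2 b1 /\ nonneg2 c1 /\ nonneg2 d1 /\ nonneg2 e1 /\ nonneg2 f1 /\
    nonneg2 a2 /\ nonneg2 b2 /\ nonneg2 c2 /\ nonneg2 d2 /\ nonneg2 e2 /\ nonneg2 f2 /\
    forall i j k, p i j k =
      (outer3 a1 b1 c1 i j k + outer3 d1 e1 f1 i j k) *
      (outer3 a2 b2 c2 i j k + outer3 d2 e2 f2 i j k).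

(* topological closure of S within Delta_7 (Euclidean topology on R^8,
   expressed with the equivalent max-norm) *)
Definition in_closure (S : tensor -> Prop) (p : tensor) : Prop :=
  in_simplex p /\
  forall eps, 0 < eps ->
    exists q, S q /\ forall i j k, Rabs (p i j k - q i j k) < eps.

Definition strictly_positive (p : tensor) : Prop := forall i j k, 0 < p i j k.

(* Both sets are cut out of the simplex by one semialgebraic condition: for
   some axis, the two slice determinants of [p] along that axis have product
   [>= 0].

   For [p = sum_r a_r (x) b_r (x) c_r] each slice determinant along
   the first axis is a quadratic form in the [a_r i] whose coefficients are
   products of 2x2 cross products of the [b_r] and of the [c_r].  Ordering each
   triple of nonnegative vectors on the projective line, two factors with the
   same middle vector make these coefficients of one sign; when all three
   middles differ, eliminating a vector by the Pluecker relation does the job.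
   For a product of two rank-two tensors the slice determinants are
   nonnegative combinations of one invariant per hidden unit, and two of the
   three axes give these invariants a common sign.  The condition is closed,
   so it passes to the closure.

   After permuting axes and flipping a state both slice
   determinants are nonnegative, so each slice is [x E00] plus a nonnegative
   rank-one matrix: this gives nonnegative rank three.  Replacing [E00] by a
   positive rank-one term common to both slices yields an RBM, exactly if
   [p > 0] and after an arbitrarily small perturbation otherwise. *)

From Stdlib Require Import Reals Lra Psatz FunctionalExtensionality.
Open Scope R_scope.

Definition swap12 (p : tensor) : tensor := fun i j k => p j i k.
Definition swap13 (p : tensor) : tensor := fun i j k => p k j i.
Definition flip3 (p : tensor) : tensor := fun i j k => p i j (negb k).

Definition symmetric (P : tensor -> Prop) : Prop :=
  forall p, P p -> P (swap12 p) /\ P (swap13 p) /\ P (flip3 p).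

Definition nonnegative (p : tensor) : Prop := forall i j k, 0 <= p i j k.

Definition nnrank_le3 (p : tensor) : Prop :=
  exists a1 b1 c1 a2 b2 c2 a3 b3 c3 : bool -> R,
    nonneg2 a1 /\ nonneg2 b1 /\ nonneg2 c1 /\
    nonneg2 a2 /\ nonneg2 b2 /\ nonneg2 c2 /\
    nonneg2 a3 /\ nonneg2 b3 /\ nonneg2 c3 /\
    forall i j k, p i j k = outer3 a1 b1 c1 i j k + outer3 a2 b2 c2 i j k + outer3 a3 b3 c3 i j k.

Definition rbm32_form (p : tensor) : Prop :=
  exists a1 b1 c1 d1 e1 f1 a2 b2 c2 d2 e2 f2 : bool -> R,
    nonneg2 a1 /\ nonneg2 b1 /\ nonneg2 c1 /\ nonneg2 d1 /\ nonneg2 e1 /\ nonneg2 f1 /\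
    nonneg2 a2 /\ nonneg2 b2 /\ nonneg2 c2 /\ nonneg2 d2 /\ nonneg2 e2 /\ nonneg2 f2 /\
    forall i j k, p i j k =
      (outer3 a1 b1 c1 i j k + outer3 d1 e1 f1 i j k) *
      (outer3 a2 b2 c2 i j k + outer3 d2 e2 f2 i j k).

Definition close (eps : R) (p q : tensor) : Prop :=
  forall i j k, Rabs (p i j k - q i j k) < eps.

Definition rbm32_approximable (p : tensor) : Prop :=
  forall eps, 0 < eps -> exists q, in_RBM32 q /\ close eps p q.

Definition reverse (v : bool -> R) : bool -> R := fun k => v (negb k).

Lemma nonneg2_reverse v : nonneg2 v -> nonneg2 (reverse v).
Proof. intros Hv k; apply Hv. Qed.

Lemma nonnegative_symmetric : symmetric nonnegative.
Proof. intros p Hp; repeat split; intros i j k; apply Hp. Qed.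

Lemma strictly_positive_symmetric : symmetric strictly_positive.
Proof. intros p Hp; repeat split; intros i j k; apply Hp. Qed.

Lemma in_simplex_symmetric : symmetric in_simplex.
Proof.
  intros p [Hp Hs]; repeat split; try (intros i j k; apply Hp);
    rewrite <- Hs; unfold tsum, swap12, swap13, flip3; simpl; ring.
Qed.

Lemma nnrank_le3_symmetric : symmetric nnrank_le3.
Proof.
  intros p (a1&b1&c1&a2&b2&c2&a3&b3&c3&?&?&?&?&?&?&?&?&?&Hp); repeat split.
  - exists b1, a1, c1, b2, a2, c2, b3, a3, c3; repeat split; auto.
    intros i j k; unfold swap12; rewrite Hp; unfold outer3; ring.
  - exists c1, b1, a1, c2, b2, a2, c3, b3, a3; repeat split; auto.
    intros i j k; unfold swap13; rewrite Hp; unfold outer3; ring.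
  - exists a1, b1, (reverse c1), a2, b2, (reverse c2), a3, b3, (reverse c3);
      repeat split; auto using nonneg2_reverse.
    intros i j k; unfold flip3; rewrite Hp; reflexivity.
Qed.

Lemma rbm32_form_symmetric : symmetric rbm32_form.
Proof.
  intros p (a1&b1&c1&d1&e1&f1&a2&b2&c2&d2&e2&f2&?&?&?&?&?&?&?&?&?&?&?&?&Hp); repeat split.
  - exists b1, a1, c1, e1, d1, f1, b2, a2, c2, e2, d2, f2; repeat split; auto.
    intros i j k; unfold swap12; rewrite Hp; unfold outer3; ring.
  - exists c1, b1, a1, f1, e1, d1, c2, b2, a2, f2, e2, d2; repeat split; auto.
    intros i j k; unfold swap13; rewrite Hp; unfold outer3; ring.
  - exists a1, b1, (reverse c1), d1, e1, (reverse f1),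
      a2, b2, (reverse c2), d2, e2, (reverse f2); repeat split; auto using nonneg2_reverse.
    intros i j k; unfold flip3; rewrite Hp; reflexivity.
Qed.

Lemma in_RBM32_symmetric : symmetric in_RBM32.
Proof.
  intros p [Hs Hf].
  destruct (in_simplex_symmetric p Hs) as (?&?&?).
  destruct (rbm32_form_symmetric p Hf) as (?&?&?).
  split; [|split]; split; assumption.
Qed.

Lemma rbm32_approximable_symmetric : symmetric rbm32_approximable.
Proof.
  intros p Hp; repeat split; intros eps Heps;
    destruct (Hp eps Heps) as (q & Hq & Hpq);
    destruct (in_RBM32_symmetric q Hq) as (H12 & H13 & H3).
  - exists (swap12 q); split; auto. intros i j k; apply Hpq.
  - exists (swap13 q); split; auto. intros i j k; apply Hpq.
  - exists (flip3 q); split; auto. intros i j k; apply Hpq.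
Qed.

Definition slice_det (p : tensor) (i : bool) : R :=
  p i false false * p i true true - p i false true * p i true false.

Definition slice_dets_prod (p : tensor) : R := slice_det p false * slice_det p true.

Definition slice_dets_agree (p : tensor) : Prop :=
  0 <= slice_dets_prod p \/ 0 <= slice_dets_prod (swap12 p) \/ 0 <= slice_dets_prod (swap13 p).

Lemma slice_det_flip3 p i : slice_det (flip3 p) i = - slice_det p i.
Proof. unfold slice_det, flip3; simpl; ring. Qed.

Lemma flip3_involutive p : flip3 (flip3 p) = p.
Proof.
  extensionality i; extensionality j; extensionality k.
  unfold flip3; rewrite Bool.negb_involutive; reflexivity.
Qed.

Lemma nonneg_mul_cases x y : 0 <= x * y -> (0 <= x /\ 0 <= y) \/ (x <= 0 /\ y <= 0).
Proof.
  intros H; destruct (Rle_dec 0 x), (Rle_dec 0 y).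
  - left; split; assumption.
  - destruct (Req_dec x 0); [right | exfalso]; nra.
  - destruct (Req_dec y 0); [right | exfalso]; nra.
  - right; split; lra.
Qed.

Lemma slice_dets_agree_ind (H Q : tensor -> Prop) :
  symmetric H -> symmetric Q ->
  (forall p, H p -> 0 <= slice_det p false -> 0 <= slice_det p true -> Q p) ->
  forall p, H p -> slice_dets_agree p -> Q p.
Proof.
  intros HH HQ base.
  assert (axis1 : forall p, H p -> 0 <= slice_dets_prod p -> Q p).
  { intros p Hp Hprod.
    destruct (nonneg_mul_cases _ _ Hprod) as [[D0 D1] | [D0 D1]]; [auto |].
    rewrite <- (flip3_involutive p).
    apply (HQ (flip3 p)), base; [apply (HH p Hp) | ..]; rewrite slice_det_flip3; lra. }
  intros p Hp [P | [P | P]].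
  - auto.
  - change p with (swap12 (swap12 p)).
    exact (proj1 (HQ _ (axis1 _ (proj1 (HH p Hp)) P))).
  - change p with (swap13 (swap13 p)).
    exact (proj1 (proj2 (HQ _ (axis1 _ (proj1 (proj2 (HH p Hp))) P)))).
Qed.


Definition vec2 (x0 x1 : R) : bool -> R := fun i => if i then x1 else x0.

Lemma nonneg2_vec2 x0 x1 : 0 <= x0 -> 0 <= x1 -> nonneg2 (vec2 x0 x1).
Proof. intros ? ? [|]; simpl; assumption. Qed.

Lemma nonneg2_const x : 0 <= x -> nonneg2 (fun _ => x).
Proof. intros ? ?; assumption. Qed.

Lemma div_nonneg x y : 0 <= x -> 0 < y -> 0 <= x / y.
Proof. intros; apply Rmult_le_pos; [| apply Rlt_le, Rinv_0_lt_compat]; assumption. Qed.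

Lemma rank_one_factor a b c d :
  0 <= a -> 0 <= b -> 0 <= c -> 0 <= d -> a * d = b * c ->
  exists u0 u1 v0 v1, 0 <= u0 /\ 0 <= u1 /\ 0 <= v0 /\ 0 <= v1 /\
    a = u0 * v0 /\ b = u0 * v1 /\ c = u1 * v0 /\ d = u1 * v1.
Proof.
  intros Ha Hb Hc Hd E.
  destruct (Req_dec (a + b) 0) as [Z | NZ].
  - exists 0, 1, c, d; repeat split; lra.
  - exists 1, ((c + d) / (a + b)), a, b.
    repeat split; try lra; [apply div_nonneg; lra | |];
      apply Rmult_eq_reg_r with (a + b); try lra; field_simplify; nra.
Qed.

Lemma slice_decomp a b c d :
  0 <= a -> 0 <= b -> 0 <= c -> 0 <= d -> 0 <= a * d - b * c ->
  exists x u0 u1 v0 v1, 0 <= x <= a /\ 0 <= u0 /\ 0 <= u1 /\ 0 <= v0 /\ 0 <= v1 /\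
    a = x + u0 * v0 /\ b = u0 * v1 /\ c = u1 * v0 /\ d = u1 * v1.
Proof.
  intros Ha Hb Hc Hd Hdet.
  destruct (Req_dec d 0) as [-> | Nd].
  - destruct (rank_one_factor a b c 0) as (u0&u1&v0&v1&?&?&?&?&?&?&?&?); try nra.
    exists 0, u0, u1, v0, v1; repeat split; lra.
  - set (x := (a * d - b * c) / d).
    assert (Hx : 0 <= x) by (apply div_nonneg; lra).
    assert (Hax : a - x = b * c / d) by (unfold x; field; lra).
    assert (0 <= b * c / d) by (apply div_nonneg; nra).
    destruct (rank_one_factor (a - x) b c d) as (u0&u1&v0&v1&?&?&?&?&?&?&?&?); try lra.
    { rewrite Hax; field; lra. }
    exists x, u0, u1, v0, v1; repeat split; lra.
Qed.

Lemma nnrank_le3_of_slice_dets_nonneg p :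
  nonnegative p -> 0 <= slice_det p false -> 0 <= slice_det p true -> nnrank_le3 p.
Proof.
  intros Hp D0 D1; unfold slice_det in *.
  destruct (slice_decomp (p false false false) (p false false true) (p false true false)
              (p false true true)) as (x0&u00&u01&v00&v01&?&?&?&?&?&?&?&?&?); auto.
  destruct (slice_decomp (p true false false) (p true false true) (p true true false)
              (p true true true)) as (x1&u10&u11&v10&v11&?&?&?&?&?&?&?&?&?); auto.
  exists (vec2 x0 x1), (vec2 1 0), (vec2 1 0), (vec2 1 0), (vec2 u00 u01), (vec2 v00 v01),
    (vec2 0 1), (vec2 u10 u11), (vec2 v10 v11).
  repeat split; try (apply nonneg2_vec2; lra).
  intros [|] [|] [|]; unfold outer3; simpl; lra.
Qed.

(* For [w false > 0] the second hidden unit is [1 + e_0 (U0/m) (V0/n) / w false]: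
   it adds the missing [U0 V0] to slice 0 and leaves slice 1 alone. *)
Lemma rbm32_form_of_common_term (w m n U0 V0 U1 V1 : bool -> R) (p : tensor) :
  nonneg2 w -> (forall j, 0 < m j) -> (forall k, 0 < n k) ->
  nonneg2 U0 -> nonneg2 V0 -> nonneg2 U1 -> nonneg2 V1 ->
  (forall i j k, p i j k = w i * m j * n k + (if i then U1 j * V1 k else U0 j * V0 k)) ->
  rbm32_form p.
Proof.
  intros Hw Hm Hn HU0 HV0 HU1 HV1 Hp.
  assert (nonneg2 m) by (intro; apply Rlt_le, Hm).
  assert (nonneg2 n) by (intro; apply Rlt_le, Hn).
  pose proof (Hm false); pose proof (Hm true); pose proof (Hn false); pose proof (Hn true).
  destruct (Rlt_dec 0 (w false)) as [W0 | W0]; [| destruct (Rlt_dec 0 (w true)) as [W1 | W1]].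
  - exists w, m, n, (vec2 0 1), U1, V1, (fun _ => 1), (fun _ => 1), (fun _ => 1),
      (vec2 (1 / w false) 0), (fun j => U0 j / m j), (fun k => V0 k / n k).
    repeat split; auto; try (apply nonneg2_vec2 || apply nonneg2_const); try lra;
      try (apply div_nonneg; lra); try (intro; apply div_nonneg; auto).
    intros [|] [|] [|]; rewrite Hp; unfold outer3; simpl; field; lra.
  - exists w, m, n, (vec2 1 0), U0, V0, (fun _ => 1), (fun _ => 1), (fun _ => 1),
      (vec2 0 (1 / w true)), (fun j => U1 j / m j), (fun k => V1 k / n k).
    repeat split; auto; try (apply nonneg2_vec2 || apply nonneg2_const); try lra;
      try (apply div_nonneg; lra); try (intro; apply div_nonneg; auto).
    intros [|] [|] [|]; rewrite Hp; unfold outer3; simpl; field; lra.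
  - assert (w false = 0) by (specialize (Hw false); lra).
    assert (w true = 0) by (specialize (Hw true); lra).
    exists (vec2 1 0), U0, V0, (vec2 0 1), U1, V1, (fun _ => 1), (fun _ => 1), (fun _ => 1),
      (fun _ => 1), (fun _ => 0), (fun _ => 0).
    repeat split; auto; try (apply nonneg2_vec2 || apply nonneg2_const); try lra.
    intros [|] [|] [|]; rewrite Hp; unfold outer3; simpl; nra.
Qed.

Definition eventually_small (P : R -> Prop) : Prop :=
  exists e0, 0 < e0 /\ forall e, 0 < e <= e0 -> P e.

Lemma eventually_small_and P Q :
  eventually_small P -> eventually_small Q -> eventually_small (fun e => P e /\ Q e).
Proof.
  intros (e1 & H1 & P1) (e2 & H2 & Q2).
  exists (Rmin e1 e2); split; [apply Rmin_glb_lt; assumption |].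
  intros e He; pose proof (Rmin_l e1 e2); pose proof (Rmin_r e1 e2).
  split; [apply P1 | apply Q2]; lra.
Qed.

Lemma eventually_small_mul_le K L : 0 < L -> eventually_small (fun e => e * K <= L).
Proof.
  intros HL; exists (L / (Rabs K + 1)); split.
  - apply Rdiv_lt_0_compat; [| pose proof (Rabs_pos K)]; lra.
  - intros e [He HeL].
    assert (e * (Rabs K + 1) <= L).
    { apply Rmult_le_compat_r with (r := Rabs K + 1) in HeL; [| pose proof (Rabs_pos K); lra].
      replace (L / (Rabs K + 1) * (Rabs K + 1)) with L in HeL by (field; pose proof (Rabs_pos K); lra).
      exact HeL. }
    pose proof (Rle_abs K); nra.
Qed.

Definition perturbation_small (a b c d e : R) : Prop :=
  e * 1 <= 1 /\ e * (2 * (b + c)) <= d /\ e * (a * (b + c)) <= b * c /\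
  e * a <= b /\ e * a <= c /\ e * a <= d.

Lemma perturbation_small_eventually a b c d :
  0 < b -> 0 < c -> 0 < d -> eventually_small (perturbation_small a b c d).
Proof.
  intros Hb Hc Hd.
  repeat apply eventually_small_and; apply eventually_small_mul_le; nra.
Qed.

(* As [slice_decomp], with [E00] replaced by [[1,e],[e,e^2]]; the
   coefficient [x] is fixed by requiring the remainder to have determinant 0. *)
Lemma slice_decomp_perturbed a b c d e :
  0 < a -> 0 < b -> 0 < c -> 0 < d -> 0 <= a * d - b * c -> 0 < e ->
  perturbation_small a b c d e ->
  exists x u0 u1 v0 v1, 0 <= x /\ 0 <= u0 /\ 0 <= u1 /\ 0 <= v0 /\ 0 <= v1 /\
    a = x + u0 * v0 /\ b = x * e + u0 * v1 /\ c = x * e + u1 * v0 /\ d = x * (e * e) + u1 * v1.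
Proof.
  intros Ha Hb Hc Hd Hdet He (S1 & S2 & S3 & S4 & S5 & S6).
  set (l := d - (b + c) * e + a * e * e).
  assert (Hl : 0 < l) by (unfold l; nra).
  set (x := (a * d - b * c) / l).
  assert (Hx : 0 <= x) by (apply div_nonneg; lra).
  assert (Hxl : x * l = a * d - b * c) by (unfold x; field; lra).
  assert (Hxa : x <= a) by (apply Rmult_le_reg_r with l; [| rewrite Hxl; unfold l]; nra).
  destruct (rank_one_factor (a - x) (b - x * e) (c - x * e) (d - x * (e * e)))
    as (u0&u1&v0&v1&?&?&?&?&?&?&?&?); try nra.
  { unfold l in Hxl; nra. }
  exists x, u0, u1, v0, v1; repeat split; lra.
Qed.

Lemma rbm32_form_of_pos_slice_dets_nonneg p :
  strictly_positive p -> 0 <= slice_det p false -> 0 <= slice_det p true -> rbm32_form p.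
Proof.
  intros Hp D0 D1; unfold slice_det in *.
  assert (Hsmall : forall i, eventually_small
             (perturbation_small (p i false false) (p i false true) (p i true false) (p i true true)))
    by (intro; apply perturbation_small_eventually; apply Hp).
  destruct (eventually_small_and _ _ (Hsmall false) (Hsmall true)) as (e & He & Hboth).
  destruct (Hboth e) as [S0 S1]; [lra |].
  destruct (slice_decomp_perturbed _ _ _ _ e (Hp _ _ _) (Hp _ _ _) (Hp _ _ _) (Hp _ _ _) D0 He S0)
    as (x0&u00&u01&v00&v01&?&?&?&?&?&?&?&?&?).
  destruct (slice_decomp_perturbed _ _ _ _ e (Hp _ _ _) (Hp _ _ _) (Hp _ _ _) (Hp _ _ _) D1 He S1)
    as (x1&u10&u11&v10&v11&?&?&?&?&?&?&?&?&?).
  apply (rbm32_form_of_common_term (vec2 x0 x1) (vec2 1 e) (vec2 1 e)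
           (vec2 u00 u01) (vec2 v00 v01) (vec2 u10 u11) (vec2 v10 v11));
    try (apply nonneg2_vec2; lra); try (intros [|]; simpl; lra).
  intros [|] [|] [|]; simpl; lra.
Qed.

Lemma rbm32_form_scale q t : rbm32_form q -> 0 < t -> rbm32_form (fun i j k => q i j k / t).
Proof.
  intros (a1&b1&c1&d1&e1&f1&a2&b2&c2&d2&e2&f2&Ha1&?&?&Hd1&?&?&?&?&?&?&?&?&Hq) Ht.
  exists (fun i => a1 i / t), b1, c1, (fun i => d1 i / t), e1, f1, a2, b2, c2, d2, e2, f2.
  repeat split; auto; try (intro i; apply div_nonneg; auto).
  intros i j k; rewrite Hq; unfold outer3; field; lra.
Qed.

Lemma tsum_bounds p m M : (forall i j k, m <= p i j k <= M) -> 8 * m <= tsum p <= 8 * M.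
Proof.
  intros Hp; unfold tsum.
  pose proof (Hp false false false); pose proof (Hp false false true);
  pose proof (Hp false true false); pose proof (Hp false true true);
  pose proof (Hp true false false); pose proof (Hp true false true);
  pose proof (Hp true true false); pose proof (Hp true true true); lra.
Qed.

Lemma in_simplex_le1 p : in_simplex p -> forall i j k, 0 <= p i j k <= 1.
Proof.
  intros [Hp Hs] i j k; split; [apply Hp |].
  pose proof (Hp false false false); pose proof (Hp false false true);
  pose proof (Hp false true false); pose proof (Hp false true true);
  pose proof (Hp true false false); pose proof (Hp true false true);
  pose proof (Hp true true false); pose proof (Hp true true true).
  unfold tsum in Hs; destruct i, j, k; lra.
Qed.

Lemma close_renormalized p d delta :
  in_simplex p -> 0 < delta -> (forall i j k, 0 <= d i j k <= delta) ->
  close (9 * delta) p (fun i j k => (p i j k + d i j k) / (1 + tsum d)).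
Proof.
  intros Hs Hdelta Hd i j k.
  pose proof (tsum_bounds d 0 delta Hd) as Td.
  pose proof (in_simplex_le1 p Hs i j k); pose proof (Hd i j k).
  set (r := (p i j k + d i j k) / (1 + tsum d)).
  assert (Hr : r * (1 + tsum d) = p i j k + d i j k) by (unfold r; field; lra).
  apply Rabs_def1; nra.
Qed.

Lemma rbm32_approximable_of_slice_dets_nonneg p :
  in_simplex p -> 0 <= slice_det p false -> 0 <= slice_det p true -> rbm32_approximable p.
Proof.
  intros Hs D0 D1 eps Heps.
  pose proof (in_simplex_le1 p Hs) as Hp; unfold slice_det in *.
  destruct (slice_decomp (p false false false) (p false false true) (p false true false)
              (p false true true)) as (x0&u00&u01&v00&v01&?&?&?&?&?&?&?&?&?); try apply Hp; auto.
  destruct (slice_decomp (p true false false) (p true false true) (p true true false)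
              (p true true true)) as (x1&u10&u11&v10&v11&?&?&?&?&?&?&?&?&?); try apply Hp; auto.
  pose proof (Hp false false false); pose proof (Hp true false false).
  set (delta := Rmin 1 (eps / 20)).
  assert (delta <= 1) by apply Rmin_l.
  assert (delta <= eps / 20) by apply Rmin_r.
  assert (0 < delta) by (apply Rmin_glb_lt; lra).
  (* [p + d] moves the weight [x] of [e_0 e_0] onto [(x + delta) (1,delta) (1,delta)] *)
  set (d := fun i j k => (vec2 x0 x1 i + delta) * vec2 1 delta j * vec2 1 delta k
                         - vec2 x0 x1 i * vec2 1 0 j * vec2 1 0 k).
  assert (Hd : forall i j k, 0 <= d i j k <= 2 * delta)
    by (intros [|] [|] [|]; unfold d; simpl; split; nra).
  pose proof (tsum_bounds d 0 (2 * delta) Hd).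
  exists (fun i j k => (p i j k + d i j k) / (1 + tsum d)); split; [split; [split |] |].
  - intros i j k; apply div_nonneg; [pose proof (Hp i j k); pose proof (Hd i j k) |]; lra.
  - destruct Hs as [_ Hs1].
    transitivity ((tsum p + tsum d) / (1 + tsum d)); [unfold tsum, Rdiv; ring |].
    rewrite Hs1; field; lra.
  - apply rbm32_form_scale; [| lra].
    apply (rbm32_form_of_common_term (fun i => vec2 x0 x1 i + delta) (vec2 1 delta) (vec2 1 delta)
             (vec2 u00 u01) (vec2 v00 v01) (vec2 u10 u11) (vec2 v10 v11));
      try (apply nonneg2_vec2; lra); try (intros [|]; simpl; lra).
    intros [|] [|] [|]; unfold d; simpl; lra.
  - intros i j k; eapply Rlt_le_trans; [apply (close_renormalized p d (2 * delta)) | ]; auto; lra.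
Qed.

Definition cross (u v : bool -> R) : R := u false * v true - u true * v false.

Lemma cross_anti u v : cross v u = - cross u v.
Proof. unfold cross; ring. Qed.

Definition same_sign3 (k1 k2 k3 : R) : Prop := 0 <= k1 * k2 /\ 0 <= k1 * k3 /\ 0 <= k2 * k3.

Lemma same_sign3_sign k1 k2 k3 :
  same_sign3 k1 k2 k3 -> exists s, s * s = 1 /\ 0 <= s * k1 /\ 0 <= s * k2 /\ 0 <= s * k3.
Proof.
  intros (H12 & H13 & H23).
  destruct (Rle_dec 0 (k1 + k2 + k3)); [exists 1 | exists (-1)];
    repeat split; try lra; apply Rnot_lt_le; intro; nra.
Qed.

Lemma same_sign3_of_sign s k1 k2 k3 :
  s * s = 1 -> 0 <= s * k1 -> 0 <= s * k2 -> 0 <= s * k3 -> same_sign3 k1 k2 k3.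
Proof. intros Hs H1 H2 H3; repeat split; nra. Qed.

Lemma same_sign3_comb_mul_nonneg k1 k2 k3 w1 w2 w3 v1 v2 v3 :
  same_sign3 k1 k2 k3 ->
  0 <= w1 -> 0 <= w2 -> 0 <= w3 -> 0 <= v1 -> 0 <= v2 -> 0 <= v3 ->
  0 <= (w1 * k1 + w2 * k2 + w3 * k3) * (v1 * k1 + v2 * k2 + v3 * k3).
Proof.
  intros (K12 & K13 & K23) ? ? ? ? ? ?.
  assert (0 <= k1 * k1) by nra. assert (0 <= k2 * k2) by nra. assert (0 <= k3 * k3) by nra.
  replace ((w1 * k1 + w2 * k2 + w3 * k3) * (v1 * k1 + v2 * k2 + v3 * k3)) with
    (w1 * v1 * (k1 * k1) + w2 * v2 * (k2 * k2) + w3 * v3 * (k3 * k3)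
     + (w1 * v2 + w2 * v1) * (k1 * k2) + (w1 * v3 + w3 * v1) * (k1 * k3)
     + (w2 * v3 + w3 * v2) * (k2 * k3)) by ring.
  repeat apply Rplus_le_le_0_compat; apply Rmult_le_pos; auto;
    try apply Rmult_le_pos; try apply Rplus_le_le_0_compat; auto; apply Rmult_le_pos; auto.
Qed.

Lemma mul3_nonneg x y z : 0 <= x -> 0 <= y -> 0 <= z -> 0 <= x * y * z.
Proof. intros; repeat apply Rmult_le_pos; assumption. Qed.

Lemma some_pair_mul_nonneg x y z : 0 <= y * z \/ 0 <= x * z \/ 0 <= x * y.
Proof.
  destruct (Rle_dec 0 x), (Rle_dec 0 y), (Rle_dec 0 z);
    first [left; nra | right; left; nra | right; right; nra].
Qed.

(* [2 slice_det p i] is a nonnegative combination of the invariants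
   [cross A2 B2 * cross A3 B3] and [cross C2 D2 * cross C3 D3] of the two hidden units. *)
Lemma slice_dets_prod_rbm_nonneg (A1 A2 A3 B1 B2 B3 C1 C2 C3 D1 D2 D3 : bool -> R) p :
  nonneg2 A1 -> nonneg2 A2 -> nonneg2 A3 -> nonneg2 B1 -> nonneg2 B2 -> nonneg2 B3 ->
  nonneg2 C1 -> nonneg2 C2 -> nonneg2 C3 -> nonneg2 D1 -> nonneg2 D2 -> nonneg2 D3 ->
  (forall i j k, p i j k = (A1 i * A2 j * A3 k + B1 i * B2 j * B3 k) *
                           (C1 i * C2 j * C3 k + D1 i * D2 j * D3 k)) ->
  0 <= cross A2 B2 * cross A3 B3 * (cross C2 D2 * cross C3 D3) ->
  0 <= slice_dets_prod p.
Proof.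
  intros HA1 HA2 HA3 HB1 HB2 HB3 HC1 HC2 HC3 HD1 HD2 HD3 Hp Hab.
  assert (Hss : same_sign3 (cross A2 B2 * cross A3 B3) (cross C2 D2 * cross C3 D3) 0)
    by (split; [| split]; lra).
  set (ipr := fun u v : bool -> R => u false * v true + u true * v false).
  set (U := fun i => 2 * (A1 i * C1 i * B1 i * C1 i * (C2 false * C2 true * C3 false * C3 true))
     + 2 * (A1 i * D1 i * B1 i * D1 i * (D2 false * D2 true * D3 false * D3 true))
     + A1 i * B1 i * C1 i * D1 i * ipr C2 D2 * ipr C3 D3).
  set (V := fun i => 2 * (A1 i * C1 i * A1 i * D1 i * (A2 false * A2 true * A3 false * A3 true))
     + 2 * (B1 i * C1 i * B1 i * D1 i * (B2 false * B2 true * B3 false * B3 true))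
     + A1 i * B1 i * C1 i * D1 i * ipr A2 B2 * ipr A3 B3).
  assert (Id : forall i, 2 * slice_det p i =
                         U i * (cross A2 B2 * cross A3 B3) + V i * (cross C2 D2 * cross C3 D3)).
  { intro i; unfold slice_det; rewrite !Hp; unfold U, V, ipr, cross; ring. }
  assert (PU : forall i, 0 <= U i).
  { intro i; unfold U, ipr.
    pose proof (HA1 i); pose proof (HB1 i); pose proof (HC1 i); pose proof (HD1 i).
    pose proof (HC2 false); pose proof (HC2 true); pose proof (HC3 false); pose proof (HC3 true).
    pose proof (HD2 false); pose proof (HD2 true); pose proof (HD3 false); pose proof (HD3 true).
    repeat (apply Rplus_le_le_0_compat || apply Rmult_le_pos); auto; lra. }
  assert (PV : forall i, 0 <= V i).
  { intro i; unfold V, ipr.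
    pose proof (HA1 i); pose proof (HB1 i); pose proof (HC1 i); pose proof (HD1 i).
    pose proof (HA2 false); pose proof (HA2 true); pose proof (HA3 false); pose proof (HA3 true).
    pose proof (HB2 false); pose proof (HB2 true); pose proof (HB3 false); pose proof (HB3 true).
    repeat (apply Rplus_le_le_0_compat || apply Rmult_le_pos); auto; lra. }
  pose proof (same_sign3_comb_mul_nonneg _ _ _ (U false) (V false) 0 (U true) (V true) 0 Hss
                (PU false) (PV false) (Rle_refl 0) (PU true) (PV true) (Rle_refl 0)).
  unfold slice_dets_prod.
  replace (slice_det p false * slice_det p true)
    with (2 * slice_det p false * (2 * slice_det p true) / 4) by field.
  rewrite !Id; clearbody U V; lra.
Qed.

Lemma rbm32_form_slice_dets_agree p : rbm32_form p -> slice_dets_agree p.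
Proof.
  intros (a1&b1&c1&d1&e1&f1&a2&b2&c2&d2&e2&f2&?&?&?&?&?&?&?&?&?&?&?&?&Hp).
  destruct (some_pair_mul_nonneg (cross a1 d1 * cross a2 d2) (cross b1 e1 * cross b2 e2)
              (cross c1 f1 * cross c2 f2)) as [Hx | [Hx | Hx]]; [left | right; left | right; right].
  - apply (slice_dets_prod_rbm_nonneg a1 b1 c1 d1 e1 f1 a2 b2 c2 d2 e2 f2); auto; lra.
  - apply (slice_dets_prod_rbm_nonneg b1 a1 c1 e1 d1 f1 b2 a2 c2 e2 d2 f2); auto; [| lra].
    intros i j k; unfold swap12; rewrite Hp; unfold outer3; ring.
  - apply (slice_dets_prod_rbm_nonneg c1 b1 a1 f1 e1 d1 c2 b2 a2 f2 e2 d2); auto; [| lra].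
    intros i j k; unfold swap13; rewrite Hp; unfold outer3; ring.
Qed.

(* [between u v w]: the ray of [v] lies between those of [u] and [w]. *)
Definition between (u v w : bool -> R) : Prop := same_sign3 (cross u v) (cross u w) (cross v w).

Lemma between_sym u v w : between u v w -> between w v u.
Proof.
  unfold between, same_sign3; rewrite (cross_anti u w), (cross_anti u v), (cross_anti v w).
  intros (? & ? & ?); repeat split; nra.
Qed.

Lemma cross_pluecker u v w k : cross v w * u k - cross u w * v k + cross u v * w k = 0.
Proof. unfold cross; destruct k; ring. Qed.

Lemma between_of_cross_eq0 u v w :
  nonneg2 u -> nonneg2 v -> nonneg2 w -> cross v w = 0 -> between u v w.
Proof.
  intros Hu Hv Hw E; unfold between, same_sign3; rewrite E, !Rmult_0_r.
  repeat split; try apply Rle_refl.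
  assert (Hsum : (v false + v true) * cross u w - (w false + w true) * cross u v
                 = (u false + u true) * cross v w) by (unfold cross; ring).
  rewrite E, Rmult_0_r in Hsum.
  pose proof (Hv false); pose proof (Hv true); pose proof (Hw false); pose proof (Hw true).
  destruct (Req_dec (v false + v true) 0) as [Z | NZ].
  - assert (cross u v = 0) by (unfold cross; replace (v false) with 0 by lra;
                                 replace (v true) with 0 by lra; ring).
    nra.
  - apply Rmult_le_reg_l with (v false + v true); [lra |].
    replace ((v false + v true) * (cross u v * cross u w))
      with (cross u v * ((v false + v true) * cross u w)) by ring.
    replace ((v false + v true) * cross u w) with ((w false + w true) * cross u v) by lra.
    rewrite Rmult_0_r; nra.
Qed.

(* Otherwise [cross v1 v2] times [cross_pluecker] is a vanishing combination of
   [v1], [v2], [v3] with nonnegative coefficients, the one of [v1] positive. *)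
Lemma cross_sign_pattern_excluded v1 v2 v3 :
  nonneg2 v1 -> nonneg2 v2 -> nonneg2 v3 ->
  ~ (0 < cross v1 v2 * cross v2 v3 /\ 0 < - cross v1 v2 * cross v1 v3).
Proof.
  intros H1 H2 H3 [P1 P2].
  assert (Z : forall k, v1 k = 0).
  { intro k.
    assert (E : cross v1 v2 * cross v2 v3 * v1 k + (- cross v1 v2 * cross v1 v3) * v2 k
                + cross v1 v2 * cross v1 v2 * v3 k = 0).
    { rewrite <- (Rmult_0_r (cross v1 v2)), <- (cross_pluecker v1 v2 v3 k); ring. }
    assert (0 <= cross v1 v2 * cross v1 v2 * v3 k)
      by (apply Rmult_le_pos; [apply Rle_0_sqr | apply H3]).
    assert (0 <= (- cross v1 v2 * cross v1 v3) * v2 k) by (apply Rmult_le_pos; [lra | apply H2]).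
    assert (0 <= cross v1 v2 * cross v2 v3 * v1 k) by (apply Rmult_le_pos; [lra | apply H1]).
    assert (Z1 : cross v1 v2 * cross v2 v3 * v1 k = 0) by lra.
    apply Rmult_integral in Z1; destruct Z1; [lra | assumption]. }
  assert (cross v1 v2 = 0) by (unfold cross; rewrite !Z; ring).
  nra.
Qed.

Lemma middle_exists v1 v2 v3 :
  nonneg2 v1 -> nonneg2 v2 -> nonneg2 v3 ->
  between v2 v1 v3 \/ between v1 v2 v3 \/ between v1 v3 v2.
Proof.
  intros H1 H2 H3; pose proof (cross_sign_pattern_excluded v1 v2 v3 H1 H2 H3) as Excl.
  unfold between, same_sign3; rewrite (cross_anti v1 v2), (cross_anti v2 v3).
  destruct (Rtotal_order (cross v1 v2) 0) as [? | [? | ?]];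
  destruct (Rtotal_order (cross v1 v3) 0) as [? | [? | ?]];
  destruct (Rtotal_order (cross v2 v3) 0) as [? | [? | ?]];
  first [ left; repeat split; nra | right; left; repeat split; nra
        | right; right; repeat split; nra | exfalso; apply Excl; split; nra ].
Qed.

Definition rank3 (a1 b1 c1 a2 b2 c2 a3 b3 c3 : bool -> R) : tensor :=
  fun i j k => a1 i * b1 j * c1 k + a2 i * b2 j * c2 k + a3 i * b3 j * c3 k.

(* Both triples of vectors are ordered alike on the projective line. *)
Definition paired (u1 u2 u3 v1 v2 v3 : bool -> R) : Prop :=
  same_sign3 (cross u1 u2 * cross v1 v2) (cross u1 u3 * cross v1 v3) (cross u2 u3 * cross v2 v3).

Lemma paired_of_same_middle u1 u2 u3 v1 v2 v3 :
  (between u2 u1 u3 /\ between v2 v1 v3) \/ (between u1 u2 u3 /\ between v1 v2 v3) \/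
  (between u1 u3 u2 /\ between v1 v3 v2) -> paired u1 u2 u3 v1 v2 v3.
Proof.
  unfold paired, between, same_sign3.
  rewrite (cross_anti u1 u2), (cross_anti v1 v2), (cross_anti u2 u3), (cross_anti v2 v3).
  intros [(? & ?) | [(? & ?) | (? & ?)]]; repeat split; nra.
Qed.

Section Rank3.

Variables a1 b1 c1 a2 b2 c2 a3 b3 c3 : bool -> R.
Hypotheses (Ha1 : nonneg2 a1) (Ha2 : nonneg2 a2) (Ha3 : nonneg2 a3).

Local Notation Y12 := (cross b1 b2 * cross c1 c2).
Local Notation Y13 := (cross b1 b3 * cross c1 c3).
Local Notation Y23 := (cross b2 b3 * cross c2 c3).

Lemma slice_det_rank3 i :
  slice_det (rank3 a1 b1 c1 a2 b2 c2 a3 b3 c3) i =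
  a1 i * a2 i * Y12 + a1 i * a3 i * Y13 + a2 i * a3 i * Y23.
Proof. unfold slice_det, rank3, cross; ring. Qed.

Lemma slice_dets_prod_rank3_nonneg :
  paired b1 b2 b3 c1 c2 c3 -> 0 <= slice_dets_prod (rank3 a1 b1 c1 a2 b2 c2 a3 b3 c3).
Proof.
  intros Hp; unfold slice_dets_prod; rewrite !slice_det_rank3.
  apply same_sign3_comb_mul_nonneg; auto; apply Rmult_le_pos; auto.
Qed.

(* Eliminating [a1] with [cross_pluecker] turns [cross a2 a3] times a slice
   determinant into a quadratic form in [(a2 i, a3 i)]. *)
Lemma slice_dets_prod_rank3_pivot :
  cross a2 a3 <> 0 ->
  same_sign3 (cross a1 a3 * Y12) (- cross a1 a2 * Y13)
             (cross a1 a3 * Y13 - cross a1 a2 * Y12 + cross a2 a3 * Y23) ->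
  0 <= slice_dets_prod (rank3 a1 b1 c1 a2 b2 c2 a3 b3 c3).
Proof.
  intros Hx Hs.
  assert (Id : forall i, cross a2 a3 * slice_det (rank3 a1 b1 c1 a2 b2 c2 a3 b3 c3) i =
     a2 i * a2 i * (cross a1 a3 * Y12) + a3 i * a3 i * (- cross a1 a2 * Y13)
     + a2 i * a3 i * (cross a1 a3 * Y13 - cross a1 a2 * Y12 + cross a2 a3 * Y23)).
  { intro i; rewrite slice_det_rank3; unfold cross; destruct i; ring. }
  assert (Hsq : 0 < cross a2 a3 * cross a2 a3) by (apply Rsqr_pos_lt; exact Hx).
  apply Rmult_le_reg_l with (cross a2 a3 * cross a2 a3); [exact Hsq |].
  rewrite Rmult_0_r; unfold slice_dets_prod.
  replace (cross a2 a3 * cross a2 a3 * (slice_det (rank3 a1 b1 c1 a2 b2 c2 a3 b3 c3) false *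
                                        slice_det (rank3 a1 b1 c1 a2 b2 c2 a3 b3 c3) true))
    with ((cross a2 a3 * slice_det (rank3 a1 b1 c1 a2 b2 c2 a3 b3 c3) false) *
          (cross a2 a3 * slice_det (rank3 a1 b1 c1 a2 b2 c2 a3 b3 c3) true)) by ring.
  rewrite !Id; apply same_sign3_comb_mul_nonneg; auto; apply Rmult_le_pos; auto.
Qed.

End Rank3.

Lemma swap12_rank3 a1 b1 c1 a2 b2 c2 a3 b3 c3 :
  swap12 (rank3 a1 b1 c1 a2 b2 c2 a3 b3 c3) = rank3 b1 a1 c1 b2 a2 c2 b3 a3 c3.
Proof. extensionality i; extensionality j; extensionality k; unfold swap12, rank3; ring. Qed.

Lemma swap13_rank3 a1 b1 c1 a2 b2 c2 a3 b3 c3 :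
  swap13 (rank3 a1 b1 c1 a2 b2 c2 a3 b3 c3) = rank3 c1 b1 a1 c2 b2 a2 c3 b3 a3.
Proof. extensionality i; extensionality j; extensionality k; unfold swap13, rank3; ring. Qed.

Lemma rank3_swap_terms12 a1 b1 c1 a2 b2 c2 a3 b3 c3 :
  rank3 a2 b2 c2 a1 b1 c1 a3 b3 c3 = rank3 a1 b1 c1 a2 b2 c2 a3 b3 c3.
Proof. extensionality i; extensionality j; extensionality k; unfold rank3; ring. Qed.

Lemma rank3_swap_terms13 a1 b1 c1 a2 b2 c2 a3 b3 c3 :
  rank3 a3 b3 c3 a2 b2 c2 a1 b1 c1 = rank3 a1 b1 c1 a2 b2 c2 a3 b3 c3.
Proof. extensionality i; extensionality j; extensionality k; unfold rank3; ring. Qed.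

Lemma rank3_swap_terms23 a1 b1 c1 a2 b2 c2 a3 b3 c3 :
  rank3 a1 b1 c1 a3 b3 c3 a2 b2 c2 = rank3 a1 b1 c1 a2 b2 c2 a3 b3 c3.
Proof. extensionality i; extensionality j; extensionality k; unfold rank3; ring. Qed.

Lemma slice_dets_agree_rank3_of_paired a1 b1 c1 a2 b2 c2 a3 b3 c3 :
  nonneg2 a1 -> nonneg2 b1 -> nonneg2 c1 -> nonneg2 a2 -> nonneg2 b2 -> nonneg2 c2 ->
  nonneg2 a3 -> nonneg2 b3 -> nonneg2 c3 ->
  paired b1 b2 b3 c1 c2 c3 \/ paired a1 a2 a3 c1 c2 c3 \/ paired b1 b2 b3 a1 a2 a3 ->
  slice_dets_agree (rank3 a1 b1 c1 a2 b2 c2 a3 b3 c3).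
Proof.
  intros ? ? ? ? ? ? ? ? ? [P | [P | P]]; unfold slice_dets_agree;
    rewrite ?swap12_rank3, ?swap13_rank3; [left | right; left | right; right];
    apply slice_dets_prod_rank3_nonneg; auto.
Qed.

Lemma slice_dets_agree_rank3_distinct_middles a1 b1 c1 a2 b2 c2 a3 b3 c3 :
  nonneg2 a1 -> nonneg2 b1 -> nonneg2 c1 -> nonneg2 a2 -> nonneg2 b2 -> nonneg2 c2 ->
  nonneg2 a3 -> nonneg2 b3 -> nonneg2 c3 ->
  between a2 a1 a3 -> between b1 b2 b3 -> between c1 c3 c2 ->
  slice_dets_agree (rank3 a1 b1 c1 a2 b2 c2 a3 b3 c3).
Proof.
  intros Ha1 Hb1 Hc1 Ha2 Hb2 Hc2 Ha3 Hb3 Hc3 A B C.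
  destruct (Req_dec (cross a2 a3) 0) as [Ea | Na].
  { apply slice_dets_agree_rank3_of_paired; auto; right; right.
    apply paired_of_same_middle; right; left; split; auto.
    apply between_of_cross_eq0; auto. }
  destruct (Req_dec (cross b1 b3) 0) as [Eb | Nb].
  { apply slice_dets_agree_rank3_of_paired; auto; right; right.
    apply paired_of_same_middle; left; split; auto.
    apply between_of_cross_eq0; auto. }
  destruct (same_sign3_sign _ _ _ A) as (sa & Sa & A12 & A23 & A13).
  destruct (same_sign3_sign _ _ _ B) as (sb & Sb & B12 & B13 & B23).
  destruct (same_sign3_sign _ _ _ C) as (sc & Sc & C13 & C12 & C23).
  rewrite (cross_anti a1 a2) in A12; rewrite (cross_anti c2 c3) in C23.
  assert (Ss : (sa * sb * sc) * (sa * sb * sc) = 1)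
    by (replace ((sa * sb * sc) * (sa * sb * sc)) with ((sa * sa) * (sb * sb) * (sc * sc))
          by ring; rewrite Sa, Sb, Sc; ring).
  pose proof (mul3_nonneg _ _ _ A12 B12 C12) as S12.
  (* the two pivots below need [s (P13 - P12 + P23) >= 0], resp.
     [- s (P12 + P13 + P23) >= 0], where [s = sa sb sc] and [Prs] is the
     product of the [r s] crosses; these two numbers sum to [- 2 s P12 >= 0] *)
  destruct (Rle_dec 0 ((sa * sb * sc) *
              (cross a1 a3 * cross b1 b3 * cross c1 c3 - cross a1 a2 * cross b1 b2 * cross c1 c2
               + cross a2 a3 * cross b2 b3 * cross c2 c3))) as [E | E]; [left | right; left].
  - apply slice_dets_prod_rank3_pivot; auto.
    apply (same_sign3_of_sign (sa * sb * sc)); auto.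
    + pose proof (mul3_nonneg _ _ _ A13 B12 C12); lra.
    + pose proof (mul3_nonneg _ _ _ A12 B13 C13); lra.
    + lra.
  - rewrite swap12_rank3, <- rank3_swap_terms12.
    apply slice_dets_prod_rank3_pivot; auto.
    rewrite (cross_anti b1 b2), (cross_anti a1 a2), (cross_anti c1 c2).
    apply (same_sign3_of_sign (- (sa * sb * sc))); [lra | ..].
    + pose proof (mul3_nonneg _ _ _ B23 A12 C12); lra.
    + pose proof (mul3_nonneg _ _ _ B12 A23 C23); lra.
    + lra.
Qed.

Lemma slice_dets_agree_rank3_middle1 a1 b1 c1 a2 b2 c2 a3 b3 c3 :
  nonneg2 a1 -> nonneg2 b1 -> nonneg2 c1 -> nonneg2 a2 -> nonneg2 b2 -> nonneg2 c2 ->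
  nonneg2 a3 -> nonneg2 b3 -> nonneg2 c3 ->
  between a2 a1 a3 -> slice_dets_agree (rank3 a1 b1 c1 a2 b2 c2 a3 b3 c3).
Proof.
  intros Ha1 Hb1 Hc1 Ha2 Hb2 Hc2 Ha3 Hb3 Hc3 A.
  destruct (middle_exists b1 b2 b3) as [B | [B | B]]; auto;
  destruct (middle_exists c1 c2 c3) as [C | [C | C]]; auto;
  try (apply slice_dets_agree_rank3_of_paired; auto;
       first [ left; apply paired_of_same_middle; tauto
             | right; left; apply paired_of_same_middle; tauto
             | right; right; apply paired_of_same_middle; tauto ]).
  - apply slice_dets_agree_rank3_distinct_middles; auto.
  - rewrite <- rank3_swap_terms23.
    apply slice_dets_agree_rank3_distinct_middles; auto; apply between_sym; auto.
Qed.

Lemma slice_dets_agree_rank3 a1 b1 c1 a2 b2 c2 a3 b3 c3 :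
  nonneg2 a1 -> nonneg2 b1 -> nonneg2 c1 -> nonneg2 a2 -> nonneg2 b2 -> nonneg2 c2 ->
  nonneg2 a3 -> nonneg2 b3 -> nonneg2 c3 ->
  slice_dets_agree (rank3 a1 b1 c1 a2 b2 c2 a3 b3 c3).
Proof.
  intros Ha1 Hb1 Hc1 Ha2 Hb2 Hc2 Ha3 Hb3 Hc3.
  destruct (middle_exists a1 a2 a3) as [A | [A | A]]; auto.
  - apply slice_dets_agree_rank3_middle1; auto.
  - rewrite <- rank3_swap_terms12; apply slice_dets_agree_rank3_middle1; auto.
  - rewrite <- rank3_swap_terms13; apply slice_dets_agree_rank3_middle1; auto.
    apply between_sym; auto.
Qed.

Lemma nnrank_le3_slice_dets_agree p : nnrank_le3 p -> slice_dets_agree p.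
Proof.
  intros (a1&b1&c1&a2&b2&c2&a3&b3&c3&?&?&?&?&?&?&?&?&?&Hp).
  replace p with (rank3 a1 b1 c1 a2 b2 c2 a3 b3 c3)
    by (extensionality i; extensionality j; extensionality k; rewrite Hp; reflexivity).
  apply slice_dets_agree_rank3; auto.
Qed.

Lemma slice_det_close p q e :
  (forall i j k, 0 <= p i j k <= 1) -> close e p q -> e <= 1 ->
  forall i, - (6 * e) <= slice_det q i - slice_det p i <= 6 * e.
Proof.
  intros Hp Hq He i; unfold slice_det.
  assert (B : forall j k, - e < q i j k - p i j k < e)
    by (intros j k; destruct (Rabs_def2 _ _ (Hq i j k)); split; lra).
  pose proof (Hp i false false); pose proof (Hp i false true);
  pose proof (Hp i true false); pose proof (Hp i true true).
  pose proof (B false false); pose proof (B false true); pose proof (B true false); pose proof (B true true).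
  split; nra.
Qed.

Lemma slice_dets_prod_neg_near p :
  (forall i j k, 0 <= p i j k <= 1) -> slice_dets_prod p < 0 ->
  exists e, 0 < e /\ forall q, close e p q -> slice_dets_prod q < 0.
Proof.
  intros Hp Hneg; exists (Rmin 1 (- slice_dets_prod p / 100)); split.
  { apply Rmin_glb_lt; lra. }
  intros q Hq; pose proof (Rmin_l 1 (- slice_dets_prod p / 100));
    pose proof (Rmin_r 1 (- slice_dets_prod p / 100)).
  pose proof (slice_det_close p q _ Hp Hq ltac:(assumption)) as D.
  assert (Bp : forall i, -1 <= slice_det p i <= 1).
  { intro i; unfold slice_det; pose proof (Hp i false false); pose proof (Hp i false true);
    pose proof (Hp i true false); pose proof (Hp i true true); split; nra. }
  unfold slice_dets_prod in *.
  pose proof (D false); pose proof (D true); pose proof (Bp false); pose proof (Bp true).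
  nra.
Qed.

Lemma close_le e e' p q : close e p q -> e <= e' -> close e' p q.
Proof. intros H He i j k; specialize (H i j k); lra. Qed.

Lemma slice_dets_agree_closed p :
  in_simplex p -> (forall eps, 0 < eps -> exists q, slice_dets_agree q /\ close eps p q) ->
  slice_dets_agree p.
Proof.
  intros Hs Happrox; pose proof (in_simplex_le1 p Hs) as Hp.
  destruct (Rle_dec 0 (slice_dets_prod p)) as [| N1]; [left; assumption |].
  destruct (Rle_dec 0 (slice_dets_prod (swap12 p))) as [| N2]; [right; left; assumption |].
  destruct (Rle_dec 0 (slice_dets_prod (swap13 p))) as [| N3]; [right; right; assumption |].
  exfalso.
  destruct (slice_dets_prod_neg_near p) as (e1 & P1 & C1); [apply Hp | lra |].
  destruct (slice_dets_prod_neg_near (swap12 p)) as (e2 & P2 & C2); [intros; apply Hp | lra |].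
  destruct (slice_dets_prod_neg_near (swap13 p)) as (e3 & P3 & C3); [intros; apply Hp | lra |].
  pose proof (Rmin_l e1 (Rmin e2 e3)); pose proof (Rmin_r e1 (Rmin e2 e3)).
  pose proof (Rmin_l e2 e3); pose proof (Rmin_r e2 e3).
  destruct (Happrox (Rmin e1 (Rmin e2 e3))) as (q & [Q | [Q | Q]] & Hpq);
    [repeat apply Rmin_glb_lt; assumption | ..].
  - assert (slice_dets_prod q < 0) by (apply C1, (close_le _ _ _ _ Hpq); lra).
    lra.
  - assert (slice_dets_prod (swap12 q) < 0)
      by (apply C2, (close_le (Rmin e1 (Rmin e2 e3))); [intros i j k; apply Hpq | lra]).
    lra.
  - assert (slice_dets_prod (swap13 q) < 0)
      by (apply C3, (close_le (Rmin e1 (Rmin e2 e3))); [intros i j k; apply Hpq | lra]).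
    lra.
Qed.

Lemma in_M33_iff_slice_dets_agree p : in_M33 p <-> in_simplex p /\ slice_dets_agree p.
Proof.
  split; intros [Hs H]; split; auto.
  - apply nnrank_le3_slice_dets_agree; exact H.
  - apply (slice_dets_agree_ind nonnegative nnrank_le3); auto using nonnegative_symmetric,
      nnrank_le3_symmetric, nnrank_le3_of_slice_dets_nonneg; exact (proj1 Hs).
Qed.

Lemma in_RBM32_iff_slice_dets_agree p :
  strictly_positive p -> in_RBM32 p <-> in_simplex p /\ slice_dets_agree p.
Proof.
  intros Hp; split; intros [Hs H]; split; auto.
  - apply rbm32_form_slice_dets_agree; exact H.
  - apply (slice_dets_agree_ind strictly_positive rbm32_form); auto using
      strictly_positive_symmetric, rbm32_form_symmetric, rbm32_form_of_pos_slice_dets_nonneg.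
Qed.

Lemma in_closure_RBM32_iff_slice_dets_agree p :
  in_closure in_RBM32 p <-> in_simplex p /\ slice_dets_agree p.
Proof.
  split; intros [Hs H]; split; auto.
  - apply slice_dets_agree_closed; auto.
    intros eps Heps; destruct (H eps Heps) as (q & [_ Hq] & Hpq).
    exists q; split; auto; apply rbm32_form_slice_dets_agree; exact Hq.
  - apply (slice_dets_agree_ind in_simplex rbm32_approximable); auto using in_simplex_symmetric,
      rbm32_approximable_symmetric, rbm32_approximable_of_slice_dets_nonneg.
Qed.

Theorem theorem2 :
  (forall p : tensor, in_M33 p <-> in_closure in_RBM32 p) /\
  (forall p : tensor, strictly_positive p -> (in_M33 p <-> in_RBM32 p)).
Proof.
  split.
  - intro p; rewrite in_M33_iff_slice_dets_agree, in_closure_RBM32_iff_slice_dets_agree.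
    reflexivity.
  - intros p Hp; rewrite in_M33_iff_slice_dets_agree, (in_RBM32_iff_slice_dets_agree p Hp).
    reflexivity.
Qed.
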